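(* The following hold. (1) Every $(1,1)$ subgraph of $Q_1$ is the single edge of $Q_1$. (2) Every $(2,2)$ subgraph of $Q_2$ contains the image under some automorphism of $Q_2$ of the edge set $\{*0,\ 0*\}$. (3) Every $(2,3)$ subgraph of $Q_3$ contains the image under some automorphism of $Q_3$ of the edge set $\{10*,\ *00,\ 0*0,\ 01*\}$ (a path with four edges). (4) Every $(2,4)$ subgraph of $Q_4$ contains the image under some automorphism of $Q_4$ of the edge set $\{*000,\ 0*00,\ 01*0,\ 011*,\ 0*11,\ *011,\ 101*,\ 10*0\}$ (a cycle of length $8$).
   Context: $Q_n$ denotes the $n$-dimensional hypercube graph on vertex set $\{0,1\}^n$, two vertices adjacent iff they differ in exactly one coordinate. A string in $\{0,1,*\}^n$ with exactly one $*$ denotes the edge of $Q_n$ joining the two vertices obtained by replacing $*$ by $0$ and by $1$. Automorphisms of $Q_n$ are the maps obtained by permuting coordinates and complementing some coordinates. Divider–Chooser game on $\{0,1\}^n$ with respect to a subgraph $G$ of $Q_n$: it lasts $n-1$ rounds; starting with the vertex set $\{0,1\}^n$, in each round the Divider picks a coordinate $i\in[n]$ not picked before and the Chooser either deletes all current vertices $x$ with $x_i=0$ or all current vertices with $x_i=1$. After $n-1$ rounds two vertices remain (they form an edge of $Q_n$); the Chooser wins if this edge belongs to $G$. A $(k,n)$ subgraph is a subgraph $G$ of $Q_n$ of maximum degree at most $k$ such that the Chooser has a winning strategy in this game. *)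

From mathcomp Require Import all_boot fingroup perm.
Set Implicit Arguments. Unset Strict Implicit. Unset Printing Implicit Defensive.

Definition vtx (n : nat) := {ffun 'I_n -> bool}.

Definition flip n (x : vtx n) (i : 'I_n) : vtx n :=
  [ffun j => if j == i then ~~ x j else x j].

Definition is_Qedge n (e : {set vtx n}) : Prop :=
  exists (i : 'I_n) (x : vtx n), e = [set x; flip x i].

Definition subgraphQ n (G : {set {set vtx n}}) : Prop :=
  forall e, e \in G -> is_Qedge e.

Definition deg n (G : {set {set vtx n}}) (v : vtx n) : nat :=
  #|[set e in G | v \in e]|.

(* Vertices still present after the coordinates in S were fixed to the
   values x j (j in S). *)
Definition cur n (S : {set 'I_n}) (x : vtx n) : {set vtx n} :=
  [set y : vtx n | [forall j in S, y j == x j]].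

Definition upd n (x : vtx n) (i : 'I_n) (b : bool) : vtx n :=
  [ffun j => if j == i then b else x j].

(* chooser_wins k S x : with k rounds remaining, coordinates S already picked
   and the Chooser having kept the vertices agreeing with x on S, the Chooser
   can force a win. A round: for every unpicked coordinate i chosen by the
   Divider, the Chooser keeps the vertices with x_i = b for some b (i.e.
   deletes those with x_i = ~~ b). *)
Fixpoint chooser_wins n (G : {set {set vtx n}}) (k : nat)
    (S : {set 'I_n}) (x : vtx n) : bool :=
  match k with
  | 0 => cur S x \in G
  | k'.+1 => [forall i : 'I_n, (i \notin S) ==>
               [exists b : bool, chooser_wins G k' (i |: S) (upd x i b)]]
  end.

Definition chooser_has_winning_strategy n (G : {set {set vtx n}}) : bool :=
  chooser_wins G n.-1 set0 [ffun => false].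

Definition kn_subgraph (k n : nat) (G : {set {set vtx n}}) : Prop :=
  [/\ subgraphQ G,
      (forall v, deg G v <= k) &
      chooser_has_winning_strategy G].

Definition autQ n (s : 'S_n) (c : vtx n) (x : vtx n) : vtx n :=
  [ffun j => x (s j) (+) c j].

Definition aut_edges n (s : 'S_n) (c : vtx n) (E : {set {set vtx n}})
  : {set {set vtx n}} := [set [set autQ s c y | y in (e : {set vtx n})] | e in (E : {set {set vtx n}})].

(* Strings in {0,1,*}^n : Some false = 0, Some true = 1, None = * . *)
Definition Z0 : option bool := Some false.
Definition O1 : option bool := Some true.
Definition St : option bool := None.

(* The set of vertices matching a string (for exactly one * : an edge). *)
Definition estr n (s : seq (option bool)) : {set vtx n} :=
  [set x : vtx n | [forall j : 'I_n,
     match nth St s j with Some b => x j == b | None => true end]].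
Arguments estr : clear implicits.
Arguments kn_subgraph : clear implicits.

From mathcomp Require Import all_boot fingroup perm.
Set Implicit Arguments. Unset Strict Implicit. Unset Printing Implicit Defensive.

(* Part (1) is immediate: Q_1 has a single edge, and with no rounds to play a
   winning Chooser must own it. Parts (2)-(4) are finite checks, done by
   reflection. The Chooser's winning condition unfolds into a monotone
   and/or formula over the edges of Q_n (a conjunction over the Divider's
   coordinates, a disjunction over the Chooser's answers); a depth-first
   search through the ways of satisfying it, closing every branch that puts
   more than k edges at some vertex, confirms that each surviving branch
   contains an automorphic image of the given edge set. *)

Section MonotoneSearch.

Variable T : eqType.

Inductive mform := MVar of T | MTrue | MAnd of mform & mform | MOr of mform & mform.

Fixpoint meval (g : pred T) (f : mform) : bool :=
  match f with
  | MVar t => g t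
  | MTrue => true
  | MAnd a b => meval g a && meval g b
  | MOr a b => meval g a || meval g b
  end.

Fixpoint msize (f : mform) : nat :=
  match f with
  | MAnd a b | MOr a b => (msize a + msize b).+1
  | _ => 1
  end.

Lemma meval_foldr_and g fs : meval g (foldr MAnd MTrue fs) = all (meval g) fs.
Proof. by elim: fs => //= f fs ->. Qed.

Variables (cap : nat) (groups patterns : seq (seq T)).

Definition overloaded (g : pred T) := has (fun I => cap < count g I) groups.
Definition covered (g : pred T) := has (all g) patterns.

(* Variables are only ever made true, which loses nothing as the formulas
   are monotone. The branching uses [if] rather than [||] and [&&], which
   [vm_compute] would evaluate strictly. *)
Fixpoint search (fuel : nat) (chosen : seq T) (goals : seq mform) : bool :=
  if fuel is fuel'.+1 then
    match goals with
    | [::] => covered (mem chosen)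
    | MVar t :: goals' =>
        if t \in chosen then search fuel' chosen goals'
        else if has (fun I => (t \in I) && (cap < count (mem (t :: chosen)) I)) groups
        then true
        else search fuel' (t :: chosen) goals'
    | MTrue :: goals' => search fuel' chosen goals'
    | MAnd a b :: goals' => search fuel' chosen [:: a, b & goals']
    | MOr a b :: goals' =>
        if meval (mem chosen) (MOr a b) then search fuel' chosen goals'
        else if search fuel' chosen (a :: goals') then search fuel' chosen (b :: goals')
        else false
    end
  else false.

Lemma searchP fuel chosen goals g :
  search fuel chosen goals -> all g chosen -> all (meval g) goals ->
  overloaded g || covered g.
Proof.
elim: fuel chosen goals => [|fuel IH] chosen [|f goals] //=.
  move=> cov gchosen _; apply/orP; right; apply: sub_has cov => P.
  by apply: sub_all => t /(allP gchosen).
move=> found gchosen /andP[gf ggoals].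
case: f found gf => [t||a b|a b] /= found gf.
- case: ifP found => [_ found|_]; first exact: IH found _ _.
  case: ifP => [/hasP[I groupI /andP[_ overI]] _|_ found].
    apply/orP; left; apply/hasP; exists I => //.
    apply: leq_trans overI (sub_count _ I) => u.
    by rewrite inE => /predU1P[-> //|/(allP gchosen)].
  by apply: IH found _ _; rewrite //= gf.
- exact: IH found _ _.
- by apply: IH found gchosen _; case/andP: gf => /= -> ->.
- case: ifP found => [_ found|_]; first exact: IH found _ _.
  case: ifP => // founda foundb.
  by case/orP: gf => gf; [apply: IH founda _ _|apply: IH foundb _ _];
    rewrite //= gf.
Qed.

End MonotoneSearch.

Arguments MTrue {T}.
Arguments MAnd {T}.
Arguments MOr {T}.

Fixpoint words_over (A : Type) (alphabet : seq A) (m : nat) : seq (seq A) :=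
  if m is m'.+1 then [seq a :: w | a <- alphabet, w <- words_over alphabet m']
  else [:: [::]].

Lemma mem_words_over (A : eqType) (alphabet : seq A) m w :
  (w \in words_over alphabet m) = (size w == m) && all (mem alphabet) w.
Proof.
elim: m w => [|m IH] [|a w] //=; rewrite ?inE //.
  by apply/allpairsP => -[[b v] [_ _]].
rewrite eqSS; apply/allpairsP/and3P => [[[b v] /= [bA vw [-> ->]]]|[wm aA wA]].
  by move: vw; rewrite IH => /andP[-> ->].
by exists (a, w); rewrite IH wm wA.
Qed.

Lemma uniq_words_over (A : eqType) (alphabet : seq A) m :
  uniq alphabet -> uniq (words_over alphabet m).
Proof.
move=> uA; elim: m => [|m IH] //=; apply: allpairs_uniq => // -[a w] [b v] _ _.
by case=> -> ->.
Qed.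

Notation word := (seq (option bool)).

Definition words := words_over [:: St; Z0; O1].
Definition bool_words := words_over [:: false; true].

Lemma mem_words m w : (w \in words m) = (size w == m).
Proof. by rewrite mem_words_over (introT allP) ?andbT // => -[[]|]. Qed.

Section Cube.

Variable n : nat.

Definition vertex_of (v : seq bool) : vtx n := [ffun j : 'I_n => nth false v j].

Definition matches (v : seq bool) (w : word) : bool :=
  all (fun j => if nth St w j is Some b then nth false v j == b else true) (iota 0 n).

Lemma mem_estr v w : (vertex_of v \in estr n w) = matches v w.
Proof.
rewrite inE; apply/forallP/allP => [vw j|vw j].
  by rewrite mem_iota => /andP[_ jn]; have := vw (Ordinal jn); rewrite ffunE.
by have := vw j; rewrite mem_iota ltn_ord ffunE; apply.
Qed.

Lemma estr_nth w (j : 'I_n) b x : x \in estr n w -> nth St w j = Some b -> x j = b.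
Proof. by rewrite inE => /forallP/(_ j) + wj; rewrite wj => /eqP. Qed.

Definition fill (w : word) (b : bool) : vtx n := [ffun j : 'I_n => odflt b (nth St w j)].

Lemma fill_estr w b : fill w b \in estr n w.
Proof. by rewrite inE; apply/forallP => j; rewrite ffunE; case: (nth St w j). Qed.

Definition coord_of (A : {set vtx n}) (j : 'I_n) : option bool :=
  if [exists x in A, exists y in A, x j != y j] then None
  else if [pick x in A] is Some x then Some (x j) else None.

Lemma coord_of_estr w (j : 'I_n) : coord_of (estr n w) j = nth St w j.
Proof.
rewrite /coord_of; case wj: (nth St w j) => [b|].
  have onj x : x \in estr n w -> x j = b by move/estr_nth; apply.
  case: existsP => [[x /andP[/onj xj /existsP[y /andP[/onj yj]]]]|_].
    by rewrite xj yj eqxx.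
  by case: pickP => [x /onj -> //|/(_ (fill w false))]; rewrite fill_estr.
case: existsP => // -[]; exists (fill w false); rewrite fill_estr /=.
by apply/existsP; exists (fill w true); rewrite fill_estr !ffunE wj.
Qed.

Lemma estr_inj : {in [pred w : word | size w == n] &, injective (estr n)}.
Proof.
move=> w1 w2 /eqP w1n /eqP w2n E; apply: (eq_from_nth (x0 := St)) => [|j].
  by rewrite w1n w2n.
by rewrite w1n => jn; rewrite -!(coord_of_estr _ (Ordinal jn)) E.
Qed.

Definition edge_words : seq word := [seq w <- words n | count (pred1 St) w == 1].

Definition vertex_groups : seq (seq word) :=
  [seq [seq w <- edge_words | matches v w] | v <- bool_words n].

Lemma count_vertex_group (G : {set {set vtx n}}) k I :
  (forall x, deg G x <= k) -> I \in vertex_groups ->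
  count (fun w => estr n w \in G) I <= k.
Proof.
move=> degG /mapP[v _ ->]; rewrite -size_filter.
set J := filter _ _.
have J_size w : w \in J -> size w == n.
  by rewrite !mem_filter mem_words => /and3P[_ _ /andP[_]].
have uniqJ : uniq (map (estr n) J).
  rewrite (map_inj_in_uniq (fun _ _ u1 u2 => estr_inj (J_size _ u1) (J_size _ u2))).
  by rewrite !filter_uniq // uniq_words_over.
apply: leq_trans (degG (vertex_of v)); rewrite /deg cardE -(size_map (estr n)).
apply: uniq_leq_size => // e /mapP[w]; rewrite mem_enum inE !mem_filter.
by case/and3P=> inG vw _ ->; rewrite inG mem_estr.
Qed.

Definition set_of (S : seq bool) : {set 'I_n} := [set j : 'I_n | nth false S j].

Definition cur_word (S x : seq bool) : word :=
  [seq if nth false S j then Some (nth false x j) else St | j <- iota 0 n].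

Lemma estr_cur_word S x : estr n (cur_word S x) = cur (set_of S) (vertex_of x).
Proof.
apply/setP => y; rewrite !inE; apply: eq_forallb => j.
by rewrite inE (nth_map 0) ?size_iota // nth_iota // ffunE; case: (nth false S j).
Qed.

Lemma set_of_set_nth S (j : 'I_n) : set_of (set_nth false S j true) = j |: set_of S.
Proof. by apply/setP => i; rewrite !inE nth_set_nth /= -val_eqE. Qed.

Lemma vertex_of_set_nth x (j : 'I_n) b :
  vertex_of (set_nth false x j b) = upd (vertex_of x) j b.
Proof. by apply/ffunP => i; rewrite !ffunE nth_set_nth /= -val_eqE. Qed.

Fixpoint game_form (k : nat) (S x : seq bool) : mform word :=
  if k is k'.+1 then
    foldr MAnd MTrue [seq if nth false S j then MTrue else
      MOr (game_form k' (set_nth false S j true) (set_nth false x j false))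
          (game_form k' (set_nth false S j true) (set_nth false x j true))
      | j <- iota 0 n]
  else MVar (cur_word S x).

Lemma game_formP (G : {set {set vtx n}}) k S x :
  chooser_wins G k (set_of S) (vertex_of x) ->
  meval (fun w => estr n w \in G) (game_form k S x).
Proof.
elim: k S x => [|k IH] S x /=; first by rewrite estr_cur_word.
move/forallP=> win; rewrite meval_foldr_and all_map; apply/allP => j.
rewrite mem_iota add0n => /andP[_ jn] /=; case: ifP => Sj //=.
have := win (Ordinal jn); rewrite inE Sj => /existsP[b].
rewrite -set_of_set_nth -vertex_of_set_nth => /IH.
by case: b => ->; rewrite ?orbT.
Qed.

Definition aut_word (s : 'S_n) (c : vtx n) (w : word) : word :=
  [seq omap (addb (c j)) (nth St w (s j)) | j <- enum 'I_n].

Lemma autQ_estr (s : 'S_n) (c : vtx n) w :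
  [set autQ s c y | y in estr n w] = estr n (aut_word s c w).
Proof.
have aut_wordE (j : 'I_n) :
    nth St (aut_word s c w) j = omap (addb (c j)) (nth St w (s j)).
  by rewrite (nth_map j) ?size_enum_ord // nth_ord_enum.
apply/setP => z; apply/imsetP/idP => [[y wy ->]|].
  rewrite inE; apply/forallP => j; rewrite aut_wordE ffunE.
  by case wsj: (nth St w (s j)) => [b|] //=; rewrite (estr_nth wy wsj) addbC.
rewrite inE => /forallP wz.
exists [ffun i => z ((s^-1)%g i) (+) c ((s^-1)%g i)]; last first.
  by apply/ffunP => j; rewrite !ffunE permK addbK.
rewrite inE; apply/forallP => i; rewrite ffunE.
have := wz ((s^-1)%g i); rewrite aut_wordE permKV.
by case: (nth St w i) => [b|] //= /eqP ->; rewrite addbC addKb.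
Qed.

Definition aut_word_seq (p : seq nat) (c : seq bool) (w : word) : word :=
  [seq omap (addb (nth false c j)) (nth St w (nth 0 p j)) | j <- iota 0 n].

Lemma perm_of_seq p : perm_eq p (iota 0 n) ->
  exists s : 'S_n, forall j : 'I_n, val (s j) = nth 0 p j.
Proof.
move=> pP; have p_size : size p = n by rewrite (perm_size pP) size_iota.
have p_lt (j : 'I_n) : nth 0 p j < n.
  have : nth 0 p j \in iota 0 n by rewrite -(perm_mem pP) mem_nth ?p_size.
  by rewrite mem_iota.
have f_inj : injective (fun j => Ordinal (p_lt j)).
  move=> j1 j2 [] /eqP; rewrite nth_uniq ?p_size ?(perm_uniq pP) ?iota_uniq //.
  by move/eqP/val_inj.
by exists (perm f_inj) => j; rewrite permE.
Qed.

Lemma aut_word_seqE (s : 'S_n) p c w :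
  (forall j : 'I_n, val (s j) = nth 0 p j) ->
  aut_word s (vertex_of c) w = aut_word_seq p c w.
Proof.
move=> sp; rewrite /aut_word_seq -val_enum_ord -map_comp.
by apply: eq_map => j /=; rewrite ffunE sp.
Qed.

Definition aut_images (P : seq word) : seq (seq word) :=
  [seq [seq aut_word_seq p c w | w <- P]
     | p <- permutations (iota 0 n), c <- bool_words n].

(* Images are compared as subsequences of [words n], which removes the
   duplicates caused by the symmetries of the pattern. *)
Definition normalize (Q : seq word) : seq word := [seq w <- words n | w \in Q].

Definition aut_patterns (P : seq word) : seq (seq word) :=
  undup (map normalize (aut_images P)).

Lemma covered_aut_patterns (g : pred word) P :
  covered (aut_patterns P) g ->
  exists (s : 'S_n) (c : vtx n), forall w, w \in P -> g (aut_word s c w).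
Proof.
case/hasP=> _ /[!mem_undup] /mapP[Q /allpairsP[[p c] [/= pP _ ->]] ->] gQ.
have [s sp] := perm_of_seq (etrans (esym (mem_permutations _ _)) pP).
exists s, (vertex_of c) => w wP; rewrite (aut_word_seqE _ _ sp).
apply: (allP gQ); rewrite mem_filter map_f // mem_words /aut_word_seq.
by rewrite size_map size_iota eqxx.
Qed.

(* Every step of [search] consumes a node of its goals, so this fuel never
   runs out. *)
Definition game_search (k : nat) (P : seq word) : bool :=
  let f := game_form n.-1 (nseq n false) (nseq n false) in
  search k vertex_groups (aut_patterns P) (msize f).+1 [::] [:: f].

Lemma game_search_sound k P (E G : {set {set vtx n}}) :
  game_search k P -> {subset E <= map (estr n) P} -> kn_subgraph k n G ->
  exists (s : 'S_n) (c : vtx n), aut_edges s c E \subset G.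
Proof.
move=> found EP [_ degG winG].
have set_of0 : set_of (nseq n false) = set0.
  by apply/setP => j; rewrite !inE nth_nseq if_same.
have vertex_of0 : vertex_of (nseq n false) = [ffun => false].
  by apply/ffunP => j; rewrite !ffunE nth_nseq if_same.
have := @game_formP G n.-1 (nseq n false) (nseq n false).
rewrite set_of0 vertex_of0 => /(_ winG) win.
have := searchP (g := fun w => estr n w \in G) found isT.
rewrite /= win => /(_ isT) /orP[/hasP[I IV]|/covered_aut_patterns[s [c Pc]]].
  by rewrite ltnNge count_vertex_group.
exists s, c; apply/subsetP => _ /imsetP[e eE ->].
by case/mapP: (EP _ eE) => w wP ->; rewrite autQ_estr; apply: Pc.
Qed.

End Cube.

Lemma Q1_edge (e : {set vtx 1}) : is_Qedge e -> e = setT.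
Proof.
case=> i [x ->]; apply/setP => y; rewrite !inE; apply/orP.
case: (y i =P x i) => yx; [left|right]; apply/eqP/ffunP => j;
  rewrite ?ffunE (ord1 j) -(ord1 i) ?eqxx //.
by case: (y i) (x i) yx => [] [].
Qed.

Lemma kn_subgraph_Q1 (G : {set {set vtx 1}}) :
  kn_subgraph 1 1 G -> G = [set estr 1 [:: St]].
Proof.
case=> edgesG _ winG.
have -> : estr 1 [:: St] = setT.
  by apply/setP => y; rewrite !inE; apply/forallP => -[[|j] ?].
have cur0 : cur set0 [ffun => false] = [set: vtx 1].
  by apply/setP => y; rewrite !inE; apply/forall_inP => j; rewrite inE.
apply/setP => e; rewrite inE; apply/idP/eqP => [/edgesG/Q1_edge //|->].
by rewrite -cur0.
Qed.

Definition path2_Q2 : seq word := [:: [:: St; Z0]; [:: Z0; St]].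
Definition path4_Q3 : seq word :=
  [:: [:: O1; Z0; St]; [:: St; Z0; Z0]; [:: Z0; St; Z0]; [:: Z0; O1; St]].
Definition cycle8_Q4 : seq word :=
  [:: [:: St; Z0; Z0; Z0]; [:: Z0; St; Z0; Z0]; [:: Z0; O1; St; Z0];
      [:: Z0; O1; O1; St]; [:: Z0; St; O1; O1]; [:: St; Z0; O1; O1];
      [:: O1; Z0; O1; St]; [:: O1; Z0; St; Z0]].

Lemma game_search_path2_Q2 : game_search 2 2 path2_Q2.
Proof. vm_cast_no_check (erefl true). Qed.
Lemma game_search_path4_Q3 : game_search 3 2 path4_Q3.
Proof. vm_cast_no_check (erefl true). Qed.
Lemma game_search_cycle8_Q4 : game_search 4 2 cycle8_Q4.
Proof. vm_cast_no_check (erefl true). Qed.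

Theorem lemma6 :
  (forall G : {set {set vtx 1}}, kn_subgraph 1 1 G ->
     G = [set estr 1 [:: St]]) /\
  (forall G : {set {set vtx 2}}, kn_subgraph 2 2 G ->
     exists (s : 'S_2) (c : vtx 2),
       aut_edges s c [set estr 2 [:: St; Z0]; estr 2 [:: Z0; St]] \subset G) /\
  (forall G : {set {set vtx 3}}, kn_subgraph 2 3 G ->
     exists (s : 'S_3) (c : vtx 3),
       aut_edges s c [set estr 3 [:: O1; Z0; St]; estr 3 [:: St; Z0; Z0];
                          estr 3 [:: Z0; St; Z0]; estr 3 [:: Z0; O1; St]]
       \subset G) /\
  (forall G : {set {set vtx 4}}, kn_subgraph 2 4 G ->
     exists (s : 'S_4) (c : vtx 4),
       aut_edges s c [set estr 4 [:: St; Z0; Z0; Z0]; estr 4 [:: Z0; St; Z0; Z0];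
                          estr 4 [:: Z0; O1; St; Z0]; estr 4 [:: Z0; O1; O1; St];
                          estr 4 [:: Z0; St; O1; O1]; estr 4 [:: St; Z0; O1; O1];
                          estr 4 [:: O1; Z0; O1; St]; estr 4 [:: O1; Z0; St; Z0]]
       \subset G).
Proof.
split; first exact: kn_subgraph_Q1.
split; [|split]; move=> G.
- by apply: game_search_sound game_search_path2_Q2 _ => e; rewrite !inE.
- by apply: game_search_sound game_search_path4_Q3 _ => e; rewrite !inE -?orbA.
- by apply: game_search_sound game_search_cycle8_Q4 _ => e; rewrite !inE -?orbA.
Qed.
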